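(* Let $\mathcal L$ be an optionality-differentiating choice logic. Then for all $\mathcal L$-formulas $A,B$: $A\equiv^{s}_{\mathcal L}B$ if and only if $A\equiv^{\mathrm{full}}_{\mathcal L}B$.
   Context: Fix a countably infinite set $\mathcal U$ of propositional variables. Let $\mathbb N=\{1,2,3,\dots\}$ and $\overline{\mathbb N}=\mathbb N\cup\{\infty\}$, with $n<\infty$ for all $n\in\mathbb N$. An interpretation is a set $\mathcal I\subseteq\mathcal U$ (the variables set to true). A choice logic $\mathcal L$ is specified by a finite set $C_{\mathcal L}$ of binary connective symbols disjoint from $\{\neg,\land,\lor\}$ and, for each $\circ\in C_{\mathcal L}$, a function $\mathrm{opt}_\circ:\mathbb N^2\to\mathbb N$ with $\mathrm{opt}_\circ(k,\ell)\le (k+1)(\ell+1)$ for all $k,\ell$, and a function $\deg_\circ:\mathbb N^2\times\overline{\mathbb N}^2\to\overline{\mathbb N}$ such that for all $k,\ell\in\mathbb N$, $m,n\in\overline{\mathbb N}$, either $\deg_\circ(k,\ell,m,n)\le \mathrm{opt}_\circ(k,\ell)$ or $\deg_\circ(k,\ell,m,n)=\infty$. The $\mathcal L$-formulas are built from variables in $\mathcal U$ using unary $\neg$ and binary $\land,\lor$ and the connectives in $C_{\mathcal L}$. The optionality $\mathrm{opt}_{\mathcal L}$ of formulas is defined by: $\mathrm{opt}_{\mathcal L}(a)=1$ for $a\in\mathcal U$; $\mathrm{opt}_{\mathcal L}(\neg F)=1$; $\mathrm{opt}_{\mathcal L}(F\land G)=\mathrm{opt}_{\mathcal L}(F\lor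 G)=\max(\mathrm{opt}_{\mathcal L}(F),\mathrm{opt}_{\mathcal L}(G))$; $\mathrm{opt}_{\mathcal L}(F\circ G)=\mathrm{opt}_\circ(\mathrm{opt}_{\mathcal L}(F),\mathrm{opt}_{\mathcal L}(G))$ for $\circ\in C_{\mathcal L}$. The satisfaction degree $\deg_{\mathcal L}(\mathcal I,F)\in\overline{\mathbb N}$ is defined by: $\deg_{\mathcal L}(\mathcal I,a)=1$ if $a\in\mathcal I$ and $\infty$ otherwise; $\deg_{\mathcal L}(\mathcal I,\neg F)=1$ if $\deg_{\mathcal L}(\mathcal I,F)=\infty$ and $\infty$ otherwise; $\deg_{\mathcal L}(\mathcal I,F\land G)=\max(\deg_{\mathcal L}(\mathcal I,F),\deg_{\mathcal L}(\mathcal I,G))$; $\deg_{\mathcal L}(\mathcal I,F\lor G)=\min(\deg_{\mathcal L}(\mathcal I,F),\deg_{\mathcal L}(\mathcal I,G))$; $\deg_{\mathcal L}(\mathcal I,F\circ G)=\deg_\circ(\mathrm{opt}_{\mathcal L}(F),\mathrm{opt}_{\mathcal L}(G),\deg_{\mathcal L}(\mathcal I,F),\deg_{\mathcal L}(\mathcal I,G))$ for $\circ\in C_{\mathcal L}$. An interpretation $\mathcal I$ is a preferred model of $F$, written $\mathcal I\in\mathrm{Pref}_{\mathcal L}(F)$, if $\deg_{\mathcal L}(\mathcal I,F)\ne\infty$ and $\deg_{\mathcal L}(\mathcal I,F)\le\deg_{\mathcal L}(\mathcal J,F)$ for all interpretations $\mathcal J$. $F[A/B]$ denotes the formula obtained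 from $F$ by replacing an occurrence of the subformula $A$ by $B$ (and equals $F$ if $A$ does not occur in $F$). Two $\mathcal L$-formulas $A,B$ are degree-equivalent, $A\equiv^{\deg}_{\mathcal L}B$, if $\deg_{\mathcal L}(\mathcal I,A)=\deg_{\mathcal L}(\mathcal I,B)$ for all interpretations $\mathcal I$; they are fully equivalent, $A\equiv^{\mathrm{full}}_{\mathcal L}B$, if $A\equiv^{\deg}_{\mathcal L}B$ and $\mathrm{opt}_{\mathcal L}(A)=\mathrm{opt}_{\mathcal L}(B)$; they are strongly equivalent, $A\equiv^{s}_{\mathcal L}B$, if $\mathrm{Pref}_{\mathcal L}(F)=\mathrm{Pref}_{\mathcal L}(F[A/B])$ for all $\mathcal L$-formulas $F$. $\mathcal L$ is optionality-differentiating if for all $\mathcal L$-formulas $A,B$ with $\mathrm{opt}_{\mathcal L}(A)\neq\mathrm{opt}_{\mathcal L}(B)$ there is an $\mathcal L$-formula $F$ with $F\not\equiv^{\deg}_{\mathcal L}F[A/B]$. *)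

From Stdlib Require Import PArith List.
Set Implicit Arguments.

(* N = {1,2,3,...} is represented by Stdlib's [positive];
   N-bar = N ∪ {∞} is represented by [option positive], with None = ∞. *)
Definition nbar := option positive.

Definition nle (x y : nbar) : Prop :=
  match x, y with
  | _, None => True
  | None, Some _ => False
  | Some a, Some b => (a <= b)%positive
  end.

Definition nmax (x y : nbar) : nbar :=
  match x, y with
  | Some a, Some b => Some (Pos.max a b)
  | _, _ => None
  end.

Definition nmin (x y : nbar) : nbar :=
  match x, y with
  | Some a, Some b => Some (Pos.min a b)
  | Some a, None => Some a
  | None, y => y
  end.

Record ChoiceLogic := {
  conn : Type;
  conn_enum : list conn;
  conn_finite : forall c : conn, In c conn_enum;
  optc : conn -> positive -> positive -> positive;
  degc : conn -> positive -> positive -> nbar -> nbar -> nbar;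
  optc_bound : forall c k l, (optc c k l <= (k + 1) * (l + 1))%positive;
  degc_bound : forall c k l m n,
    degc c k l m n = None \/ nle (degc c k l m n) (Some (optc c k l))
}.

(* Propositional variables: U = nat (countably infinite). The connective
   symbols are constructors distinct from Neg/And/Or, hence disjoint. *)
Inductive formula (C : Type) : Type :=
| Var : nat -> formula C
| Neg : formula C -> formula C
| And : formula C -> formula C -> formula C
| Or  : formula C -> formula C -> formula C
| Conn : C -> formula C -> formula C -> formula C.

Arguments Var {C} _.

(* Interpretations: subsets of U = nat, as characteristic functions. *)
Definition interp := nat -> bool.

Fixpoint opt (L : ChoiceLogic) (F : formula (conn L)) : positive :=
  match F with
  | Var _ => 1%positive
  | Neg _ => 1%positive
  | And F G => Pos.max (opt L F) (opt L G)
  | Or F G => Pos.max (opt L F) (opt L G)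
  | Conn c F G => optc L c (opt L F) (opt L G)
  end.

Fixpoint deg (L : ChoiceLogic) (I : interp) (F : formula (conn L)) : nbar :=
  match F with
  | Var a => if I a then Some 1%positive else None
  | Neg F => match deg L I F with None => Some 1%positive | Some _ => None end
  | And F G => nmax (deg L I F) (deg L I G)
  | Or F G => nmin (deg L I F) (deg L I G)
  | Conn c F G => degc L c (opt L F) (opt L G) (deg L I F) (deg L I G)
  end.

Definition Pref (L : ChoiceLogic) (F : formula (conn L)) (I : interp) : Prop :=
  deg L I F <> None /\ forall J : interp, nle (deg L I F) (deg L J F).

(* One-hole contexts: F[A/B] (replacing one occurrence of A in F by B) is
   [plug K B] where F = [plug K A]. *)
Inductive ctx (C : Type) : Type :=
| Hole : ctx C
| NegC : ctx C -> ctx C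
| AndL : ctx C -> formula C -> ctx C
| AndR : formula C -> ctx C -> ctx C
| OrL  : ctx C -> formula C -> ctx C
| OrR  : formula C -> ctx C -> ctx C
| ConnL : C -> ctx C -> formula C -> ctx C
| ConnR : C -> formula C -> ctx C -> ctx C.

Arguments Hole {C}.

Fixpoint plug (C : Type) (K : ctx C) (X : formula C) : formula C :=
  match K with
  | Hole => X
  | NegC K => Neg (plug K X)
  | AndL K G => And (plug K X) G
  | AndR F K => And F (plug K X)
  | OrL K G => Or (plug K X) G
  | OrR F K => Or F (plug K X)
  | ConnL c K G => Conn c (plug K X) G
  | ConnR c F K => Conn c F (plug K X)
  end.

Definition deg_equiv (L : ChoiceLogic) (A B : formula (conn L)) : Prop :=
  forall I, deg L I A = deg L I B.

Definition full_equiv (L : ChoiceLogic) (A B : formula (conn L)) : Prop :=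
  deg_equiv L A B /\ opt L A = opt L B.

(* Strong equivalence: Pref(F) = Pref(F[A/B]) for all F (and every
   occurrence of A in F; if A does not occur, F[A/B] = F and the condition
   is trivial). *)
Definition strong_equiv (L : ChoiceLogic) (A B : formula (conn L)) : Prop :=
  forall K : ctx (conn L), forall I : interp,
    Pref L (plug K A) I <-> Pref L (plug K B) I.

Definition opt_differentiating (L : ChoiceLogic) : Prop :=
  forall A B : formula (conn L), opt L A <> opt L B ->
    exists K : ctx (conn L), ~ deg_equiv L (plug K A) (plug K B).

From Stdlib Require Import PArith List Lia Bool Arith.
Import ListNotations.

(* Full ⇒ strong: full equivalence is a congruence for every connective
   (degree and optionality of a compound only depend on those of its parts),
   and degree-equivalent formulas have the same preferred models.

   Strong ⇒ full: the core is that strongly equivalent formulas are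
   degree-equivalent.  Given an interpretation I, pick a variable p fresh for
   A and B and let chi be the classical formula characterising I on the
   variables of A and B.  The context
       K[X] = (X ∧ chi ∧ p) ∨ (B ∧ chi ∧ ¬p)
   gives every model J of chi degree deg(I,X) if J ⊨ p and deg(I,B) otherwise,
   and degree ∞ to all other J.  Comparing the preferred models of K[A] and
   K[B] at the two extensions of I on p forces deg(I,A) = deg(I,B).  Since
   strong equivalence is stable under plugging into contexts, A and B are
   then degree-equivalent in every context, so by optionality
   differentiation they also have the same optionality. *)

Lemma nle_refl (x : nbar) : nle x x.
Proof. destruct x; simpl; auto; lia. Qed.

Lemma nle_antisym (x y : nbar) : nle x y -> nle y x -> x = y.
Proof.
  destruct x as [a|], y as [b|]; simpl; intros Hxy Hyx; try contradiction; auto.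
  f_equal; lia.
Qed.

Lemma nmax_one (x : nbar) : nmax x (Some 1%positive) = x.
Proof. destruct x; simpl; auto. f_equal; lia. Qed.

Lemma nmax_none (x : nbar) : nmax x None = None.
Proof. destruct x; auto. Qed.

Lemma nmin_none (x : nbar) : nmin x None = x.
Proof. destruct x; auto. Qed.

Section ChoiceLogicFacts.
Variable L : ChoiceLogic.
Notation formula := (formula (conn L)).
Notation ctx := (ctx (conn L)).

Lemma Pref_deg_equiv (X Y : formula) (I : interp) :
  deg_equiv L X Y -> Pref L X I -> Pref L Y I.
Proof.
  intros HXY [Hfin Hmin]; split.
  - rewrite <- HXY; exact Hfin.
  - intro J; rewrite <- !HXY; apply Hmin.
Qed.

Lemma full_equiv_plug (A B : formula) (K : ctx) :
  full_equiv L A B -> full_equiv L (plug K A) (plug K B).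
Proof.
  intros [HD HO]; induction K; simpl; try destruct IHK as [HD' HO'];
    split; try intro I; simpl; auto;
    try rewrite HD'; try rewrite HO'; reflexivity.
Qed.

Fixpoint ctx_comp (K1 K2 : ctx) : ctx :=
  match K1 with
  | Hole => K2
  | NegC K => NegC (ctx_comp K K2)
  | AndL K G => AndL (ctx_comp K K2) G
  | AndR G K => AndR G (ctx_comp K K2)
  | OrL K G => OrL (ctx_comp K K2) G
  | OrR G K => OrR G (ctx_comp K K2)
  | ConnL c K G => ConnL c (ctx_comp K K2) G
  | ConnR c G K => ConnR c G (ctx_comp K K2)
  end.

Lemma plug_ctx_comp (K1 K2 : ctx) (X : formula) :
  plug (ctx_comp K1 K2) X = plug K1 (plug K2 X).
Proof. induction K1; simpl; try rewrite IHK1; reflexivity. Qed.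

Lemma strong_equiv_plug (A B : formula) (K : ctx) :
  strong_equiv L A B -> strong_equiv L (plug K A) (plug K B).
Proof. intros HS K' I; rewrite <- !plug_ctx_comp; apply HS. Qed.

Fixpoint vars (X : formula) : list nat :=
  match X with
  | Var a => [a]
  | Neg X => vars X
  | And X Y | Or X Y | Conn _ X Y => vars X ++ vars Y
  end.

Lemma deg_ext (X : formula) (I J : interp) :
  (forall v, In v (vars X) -> I v = J v) -> deg L I X = deg L J X.
Proof.
  induction X; simpl; intros H;
    try (rewrite IHX1, IHX2 by (intros; apply H, in_or_app; auto); reflexivity).
  - rewrite (H n) by auto; reflexivity.
  - rewrite IHX by auto; reflexivity.
Qed.

Definition agree (V : list nat) (I J : interp) : bool :=
  forallb (fun v => Bool.eqb (J v) (I v)) V.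

Lemma agree_spec (V : list nat) (I J : interp) :
  agree V I J = true -> forall v, In v V -> J v = I v.
Proof.
  unfold agree; rewrite forallb_forall; intros H v Hv; apply eqb_prop, H, Hv.
Qed.

Definition chi (I : interp) (V : list nat) : formula :=
  fold_right (fun v acc => And (if I v then Var v else Neg (Var v)) acc)
    (Or (Var 0) (Neg (Var 0))) V.

Lemma deg_chi (I J : interp) (V : list nat) :
  deg L J (chi I V) = if agree V I J then Some 1%positive else None.
Proof.
  unfold agree; induction V as [|a V IHV]; simpl.
  - destruct (J 0); reflexivity.
  - fold (chi I V); rewrite IHV.
    destruct (I a), (J a) eqn:E; simpl; rewrite ?E;
      destruct (forallb _ V); reflexivity.
Qed.

Definition fresh (V : list nat) : nat := S (fold_right Nat.max 0 V).

Lemma fresh_not_in (V : list nat) : ~ In (fresh V) V.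
Proof.
  assert (Hbound : forall v, In v V -> v <= fold_right Nat.max 0 V).
  { induction V as [|a V IHV]; simpl; [tauto|].
    intros v [<-|Hv]; [lia|specialize (IHV v Hv); lia]. }
  intros Hin; specialize (Hbound _ Hin); unfold fresh in Hbound; lia.
Qed.

Definition update (I : interp) (p : nat) (b : bool) : interp :=
  fun v => if Nat.eqb v p then b else I v.

Section Probe.
Variables (I : interp) (A B : formula).

Let V := vars A ++ vars B.
Let p := fresh V.
Let probe : ctx :=
  OrL (AndL (AndL Hole (chi I V)) (Var p)) (And (And B (chi I V)) (Neg (Var p))).

Lemma deg_probe (X : formula) (J : interp) :
  (forall v, In v (vars X) -> In v V) ->
  deg L J (plug probe X) =
  if agree V I J then (if J p then deg L I X else deg L I B) else None.
Proof.
  intros HX; simpl; rewrite deg_chi.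
  destruct (agree V I J) eqn:Ha.
  - pose proof (agree_spec _ _ _ Ha) as HJ.
    rewrite (deg_ext X J I) by auto.
    rewrite (deg_ext B J I) by (intros; apply HJ, in_or_app; auto).
    destruct (J p); simpl; rewrite !nmax_one, nmax_none; [apply nmin_none|reflexivity].
  - rewrite !nmax_none; reflexivity.
Qed.

Lemma deg_probe_A (J : interp) : deg L J (plug probe A) =
  if agree V I J then (if J p then deg L I A else deg L I B) else None.
Proof. apply deg_probe; intros; apply in_or_app; auto. Qed.

Lemma deg_probe_B (J : interp) : deg L J (plug probe B) =
  if agree V I J then deg L I B else None.
Proof.
  rewrite deg_probe by (intros; apply in_or_app; auto); now destruct (J p).
Qed.

Lemma agree_update (b : bool) : agree V I (update I p b) = true.
Proof.
  apply forallb_forall; intros v Hv; unfold update.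
  assert (Hvp : v <> p) by (intros ->; exact (fresh_not_in V Hv)).
  rewrite (proj2 (Nat.eqb_neq v p) Hvp); apply eqb_reflx.
Qed.

Lemma update_at (b : bool) : update I p b p = b.
Proof. unfold update; now rewrite Nat.eqb_refl. Qed.

(* If deg(I,B) is finite, both extensions of I to p are preferred for the
   probed B, whose degree is deg(I,B) on all models of [chi I V]. *)
Lemma Pref_probe_B (b : bool) :
  deg L I B <> None -> Pref L (plug probe B) (update I p b).
Proof.
  intros Hfin; split.
  - now rewrite deg_probe_B, agree_update.
  - intro J; rewrite !deg_probe_B, agree_update.
    destruct (agree V I J); [apply nle_refl|now destruct (deg L I B)].
Qed.

Lemma strong_equiv_deg_at : strong_equiv L A B -> deg L I A = deg L I B.
Proof.
  intros HS.
  destruct (deg L I B) as [y|] eqn:Eb.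
  - (* both extensions of I are preferred for the probed A; compare them *)
    assert (Pref_A : forall b, Pref L (plug probe A) (update I p b)).
    { intro b; apply HS, Pref_probe_B; congruence. }
    destruct (Pref_A true) as [_ Hle], (Pref_A false) as [_ Hge].
    specialize (Hle (update I p false)); specialize (Hge (update I p true)).
    rewrite !deg_probe_A, !agree_update, !update_at, Eb in *.
    now apply nle_antisym.
  - (* a finite deg(I,A) would make the probed A, but not B, satisfiable *)
    destruct (deg L I A) as [x|] eqn:Ea; [exfalso|reflexivity].
    assert (Pref_A : Pref L (plug probe A) (update I p true)).
    { split; rewrite ?deg_probe_A, agree_update, update_at, Ea; [discriminate|].
      intro J; rewrite deg_probe_A.
      rewrite Ea, Eb; destruct (agree V I J), (J p); simpl; auto; lia. }
    destruct (proj1 (HS probe _) Pref_A) as [Hfin _].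
    rewrite deg_probe_B, agree_update, Eb in Hfin; now apply Hfin.
Qed.

End Probe.

Lemma strong_equiv_deg_equiv (A B : formula) :
  strong_equiv L A B -> deg_equiv L A B.
Proof. intros HS I; now apply strong_equiv_deg_at. Qed.

End ChoiceLogicFacts.

Theorem mainTheorem8 (L : ChoiceLogic) (HL : opt_differentiating L)
  (A B : formula (conn L)) :
  strong_equiv L A B <-> full_equiv L A B.
Proof.
  split.
  - intros HS; split; [now apply strong_equiv_deg_equiv|].
    destruct (Pos.eq_dec (opt L A) (opt L B)) as [Heq|Hneq]; [exact Heq|].
    destruct (HL A B Hneq) as [K HK]; exfalso; apply HK.
    apply strong_equiv_deg_equiv, strong_equiv_plug, HS.
  - intros Hfull K I.
    pose proof (proj1 (full_equiv_plug L A B K Hfull)) as HD.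
    split; apply Pref_deg_equiv; [exact HD|intro J; symmetry; apply HD].
Qed.
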